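(* Let $(X,Y,R)$ be a random triple with $X\in\mathbb{R}^d$, $Y\in\{0,1\}$, $R\in\{0,1\}$, $P(Y=y,R=r)>0$ for all $y,r$, and with strictly positive conditional Lebesgue densities $p(x\mid Y=y,R=r)$. Suppose the exponential tilt model with $T(x)=x$ holds: there exist $\alpha_0^\star,\alpha_1^\star\in\mathbb{R}$, $\beta_0^\star,\beta_1^\star\in\mathbb{R}^d$ such that for all $x,y$, $$p(x\mid Y=y,R=0)P(Y=y\mid R=0)=\exp(\alpha_y^\star+{\beta_y^\star}^\top x)\,p(x\mid Y=y,R=1)P(Y=y\mid R=1).$$ Let $B=(\beta_0^\star,\beta_1^\star)\in\mathbb{R}^{d\times 2}$, $U=B^\top X$, and $V=(\mathbf{I}-\mathbf{P}_B)X$, where $\mathbf{P}_B$ is the orthogonal projection onto the column space of $B$. Then $V\perp R\mid (Y,U)$, and hence $X\perp R\mid (Y,U)$.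
   Context: $\perp$ denotes conditional independence. *)

From HB Require Import structures.
From mathcomp Require Import all_boot all_order all_algebra.
From mathcomp Require Import all_classical all_reals all_analysis.
Set Implicit Arguments.
Unset Strict Implicit.
Unset Printing Implicit Defensive.
Import Order.TTheory GRing.Theory Num.Theory.
Local Open Scope classical_set_scope.
Local Open Scope ring_scope.

(* R^d is represented by [d.-tuple R], with its product (Borel) sigma-algebra
   generated by the coordinate projections (library instance). *)

(* Lebesgue measure on R^d, characterised by its values on closed boxes
   (this determines it uniquely on the Borel sets). *)
Definition is_lebesgue_measure_Rd {R : realType} (d : nat)
  (lam : {measure set (d.-tuple R) -> \bar R}) : Prop :=
  forall a b : 'I_d -> R, (forall i, a i <= b i) ->
    lam [set x | forall i, a i <= tnth x i <= b i] = (\prod_(i < d) (b i - a i))%:E.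

(* g : TW -> R is a version of the conditional probability P(E | W),
   i.e. of E[1_E | sigma(W)] written as a function of W. *)
Definition cond_prob_version {R : realType} {dO} {Om : measurableType dO}
  (P : probability Om R) {dW} {TW : measurableType dW}
  (W : Om -> TW) (E : set Om) (g : TW -> R) : Prop :=
  measurable_fun setT g /\ (forall w, 0 <= g w <= 1) /\
  forall D : set TW, measurable D ->
    (\int[P]_(om in W @^-1` D) (g (W om))%:E = P (E `&` W @^-1` D))%E.

Definition cond_indep {R : realType} {dO} {Om : measurableType dO}
  (P : probability Om R) {dV dS dW} {TV : measurableType dV}
  {TS : measurableType dS} {TW : measurableType dW}
  (V : Om -> TV) (S : Om -> TS) (W : Om -> TW) : Prop :=
  forall (A : set TV) (B : set TS), measurable A -> measurable B ->
  exists gA gB gAB : TW -> R,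
    [/\ cond_prob_version P W (V @^-1` A) gA,
        cond_prob_version P W (S @^-1` B) gB,
        cond_prob_version P W (V @^-1` A `&` S @^-1` B) gAB &
        {ae P, forall om, gAB (W om) = gA (W om) * gB (W om)}].

Definition tcol {R : realType} {d : nat} (x : d.-tuple R) : 'cV[R]_d :=
  \col_i tnth x i.
Definition coltup {R : realType} {d : nat} (v : 'cV[R]_d) : d.-tuple R :=
  [tuple v i 0 | i < d].

Definition condP {R : realType} {dO} {Om : measurableType dO}
  (P : probability Om R) (A B : set Om) : R :=
  fine (P (A `&` B)) / fine (P B).

Definition is_orth_proj_colspace {R : realType} {d m : nat}
  (PB : 'M[R]_d) (B : 'M[R]_(d, m)) : Prop :=
  [/\ PB^T = PB, PB *m PB = PB & (PB^T == B^T)%MS].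

(* Bayes' rule turns the exponential tilt into a logistic posterior for R:
   P(R = 1 | X = x, Y = y) = (1 + exp(alpha_y + beta_y^T x) P(R = 0) / P(R = 1))^-1,
   which depends on x only through U = B^T x.  Hence P(R in B | X, Y) is a function
   of W = (Y, U), and for every measurable function V of X the tower property gives
   P(V in A, R in B | W) = E[1_(V in A) P(R in B | W) | W] = P(V in A | W) P(R in B | W),
   where a version of P(V in A | W) comes from the Radon-Nikodym theorem applied to the
   law of W. *)

From HB Require Import structures.
From mathcomp Require Import all_boot all_order all_algebra.
From mathcomp Require Import all_classical all_reals all_analysis.
From mathcomp Require Import measurable_realfun.
From mathcomp.algebra_tactics Require Import ring lra.
Set Implicit Arguments.
Unset Strict Implicit.
Unset Printing Implicit Defensive.
Import Order.TTheory GRing.Theory Num.Theory.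
Local Open Scope classical_set_scope.
Local Open Scope ring_scope.

Lemma measurableT_preimage d d' (T : measurableType d) (T' : measurableType d')
    (f : T -> T') (A : set T') :
  measurable_fun setT f -> measurable A -> measurable (f @^-1` A).
Proof. by move=> mf mA; rewrite -[X in measurable X]setTI; exact: mf. Qed.

Section integral_density.
Local Open Scope ereal_scope.
Context d (T : measurableType d) (R : realType).
Variables (mu nu : {measure set T -> \bar R}) (q : T -> R).
Hypotheses (mq : measurable_fun setT q) (q0 : forall x, (0 <= q x)%R).
Hypothesis nuq : forall A, measurable A -> nu A = \int[mu]_(x in A) (q x)%:E.

Lemma integral_density_indic (A E : set T) : measurable A -> measurable E ->
  \int[nu]_(x in E) (\1_A x)%:E = \int[mu]_(x in E) ((\1_A x)%:E * (q x)%:E).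
Proof.
move=> mA mE; rewrite integral_indic// nuq; last exact: measurableI.
rewrite setIC integral_mkcondr epatch_indic.
by apply: eq_integral => x _; rewrite muleC.
Qed.

Import HBNNSimple.

Lemma integral_density_nnsfun (h : {nnsfun T >-> R}) (E : set T) :
  measurable E ->
  \int[nu]_(x in E) (h x)%:E = \int[mu]_(x in E) ((h x)%:E * (q x)%:E).
Proof.
move=> mE; have mq' : measurable_fun E (EFin \o q).
  exact/measurable_EFinP/measurable_funTS.
have mhr r : measurable_fun E (fun x => (r * \1_(h @^-1` [set r]) x)%:E).
  by apply/measurable_EFinP; apply: measurable_funM.
under eq_integral do rewrite fimfunE -fsumEFin//.
under [RHS]eq_integral => x _.
  rewrite fimfunE -fsumEFin// ge0_mule_fsuml => [|r]; last exact: nnfun_muleindic_ge0.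
  over.
have hr0 r x : 0 <= (r * \1_(h @^-1` [set r]) x)%:E.
  exact: nnfun_muleindic_ge0.
rewrite !ge0_integral_fsum//; last 2 first.
- by move=> r; apply: emeasurable_funM.
- by move=> r x _; rewrite mule_ge0 ?hr0 ?lee_fin.
apply: eq_fsbigr => r /[!inE] -[x _ <-].
rewrite integralZl_indic_nnsfun//.
under [RHS]eq_integral do rewrite EFinM -muleA.
rewrite ge0_integralZl ?lee_fin ?integral_density_indic//.
- by apply: emeasurable_funM => //; exact/measurable_EFinP.
- by move=> y _; rewrite mule_ge0 ?lee_fin.
Qed.

Lemma integral_density (f : T -> \bar R) (E : set T) :
  measurable E -> measurable_fun E f -> (forall x, E x -> 0 <= f x) ->
  \int[nu]_(x in E) f x = \int[mu]_(x in E) (f x * (q x)%:E).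
Proof.
move=> mE mf f0; pose h := nnsfun_approx mE mf.
have mh n : measurable_fun E (EFin \o h n).
  exact/measurable_EFinP/measurable_funTS.
have mq' : measurable_fun E (EFin \o q).
  exact/measurable_EFinP/measurable_funTS.
have h0 n x : 0 <= (h n x)%:E by rewrite lee_fin.
have nd_h x : {homo (fun n => (h n x)%:E) : m n / (m <= n)%N >-> m <= n}.
  by move=> m n mn; rewrite lee_fin; exact/lefP/nd_nnsfun_approx.
transitivity (limn (fun n => \int[nu]_(x in E) (h n x)%:E)).
  rewrite -monotone_convergence//; apply: eq_integral => x /[!inE] Ex.
  by apply/esym/cvg_lim => //; exact: cvg_nnsfun_approx.
transitivity (limn (fun n => \int[mu]_(x in E) ((h n x)%:E * (q x)%:E))).
  by congr (limn _); apply/funext => n; exact: integral_density_nnsfun.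
rewrite -monotone_convergence//; last 3 first.
- by move=> n; apply: emeasurable_funM; [exact: mh|exact: mq'].
- by move=> n x _; rewrite mule_ge0 ?lee_fin.
- by move=> x _ m n mn; rewrite lee_wpmul2r ?lee_fin//; exact: nd_h.
apply: eq_integral => x /[!inE] Ex; apply/cvg_lim => //.
by apply: cvgeZr => //; exact: cvg_nnsfun_approx.
Qed.

End integral_density.

Lemma integral_mrestr d (T : measurableType d) (R : realType)
    (mu : {measure set T -> \bar R}) (E : set T) (mE : measurable E)
    (f : T -> \bar R) (S : set T) :
  measurable S -> measurable_fun S f -> (forall x, S x -> (0 <= f x)%E) ->
  (\int[mrestr mu mE]_(x in S) f x = \int[mu]_(x in S `&` E) f x)%E.
Proof.
move=> mS mf f0.
rewrite (@integral_density _ _ _ mu (mrestr mu mE) (\1_E))//; last first.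
  by move=> A mA; rewrite integral_indic// setIC.
by rewrite integral_mkcondr epatch_indic.
Qed.

Section law_density.
Local Open Scope ereal_scope.
Context d d' (T : measurableType d) (T' : measurableType d') (R : realType).
Variables (mu : {measure set T -> \bar R}) (lam : {measure set T' -> \bar R}).
Variables (X : T -> T') (C : set T) (q : T' -> R).
Hypotheses (mX : measurable_fun setT X) (mC : measurable C).
Hypotheses (mq : measurable_fun setT q) (q0 : forall x, (0 <= q x)%R).
Hypothesis law_q : forall B, measurable B ->
  mu (X @^-1` B `&` C) = \int[lam]_(x in B) (q x)%:E.

Lemma integral_law_density (phi : T' -> \bar R) (A : set T') :
  measurable A -> measurable_fun A phi -> (forall x, A x -> 0 <= phi x) ->
  \int[mu]_(t in X @^-1` A `&` C) phi (X t) = \int[lam]_(x in A) (phi x * (q x)%:E).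
Proof.
move=> mA mphi phi0.
have mXA := measurableT_preimage mX mA.
rewrite -(integral_mrestr mu mC)//; last 2 first.
- by apply: (measurable_comp mA _ mphi (measurable_funTS mX)) => _ [t ? <-].
- by move=> t /phi0.
rewrite -(ge0_integral_pushforward mX)//; last by move=> x /[!inE] /phi0.
by apply: integral_density => // B mB; rewrite -law_q.
Qed.

End law_density.

Lemma density_gt1_null d (T : measurableType d) (R : realType)
    (mu : {measure set T -> \bar R}) (f : T -> \bar R) :
  mu.-integrable setT f ->
  (forall A, measurable A -> (\int[mu]_(x in A) f x <= mu A)%E) ->
  mu [set x | (1 < f x)%E] = 0%E.
Proof.
move=> intf fle; set S := [set x | _].
have mS : measurable S.
  by rewrite -[S]setTI; apply: measurable_lte => //; exact: measurable_int intf.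
have f_eq1 A : A `<=` S -> measurable A ->
    (\int[mu]_(x in A) f x = \int[mu]_(x in A) (cst 1%E) x)%E.
  move=> AS mA; rewrite integral_cst// mul1e; apply/eqP; rewrite eq_le fle//=.
  rewrite -[X in (X <= _)%E]mul1e -integral_cst//; apply: ge0_le_integral => //.
  - exact/measurable_funTS/measurable_int/intf.
  - by move=> x /AS/ltW.
have [N [mN N0 SN]] := integral_ae_eq mS (integrableS measurableT mS (subsetT S) intf)
  (measurable_cst _) f_eq1.
apply/eqP; rewrite eq_le measure_ge0 andbT -N0 le_measure ?inE// => x Sx.
by apply: SN => /(_ Sx) f1; move: Sx; rewrite /S/= f1 ltxx.
Qed.

Section conditional_probability.
Local Open Scope ereal_scope.
Context dO (Om : measurableType dO) (R : realType) (P : probability Om R).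
Context dW (TW : measurableType dW) (W : Om -> TW).
Hypothesis mW : measurable_fun setT W.

Section law.
Variable m : {finite_measure set Om -> \bar R}.

(* The measure instance of [pushforward m W] takes the measurability of [W] as an
   argument, which canonical structure inference cannot supply. *)
Definition law : set TW -> \bar R := pushforward m W.

Let law0 : law set0 = 0. Proof. by apply: measure0; exact: mW. Qed.
Let law_ge0 D : 0 <= law D. Proof. by apply: measure_ge0; exact: mW. Qed.
Let law_sigma_additive : semi_sigma_additive law.
Proof. by apply: measure_semi_sigma_additive; exact: mW. Qed.
HB.instance Definition _ := isMeasure.Build _ _ _ law law0 law_ge0 law_sigma_additive.

Let law_fin : fin_num_fun law.
Proof. by move=> D mD; rewrite fin_num_measure//; exact: measurableT_preimage. Qed.
HB.instance Definition _ := Measure_isFinite.Build _ _ _ law law_fin.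
End law.

Lemma cond_prob_version_exists (E : set Om) : measurable E ->
  exists g, cond_prob_version P W E g.
Proof.
move=> mE; have PEfin : P E < +oo by rewrite (le_lt_trans (probability_le1 _ mE)) ?ltry.
pose nu := law (mfrestr mE PEfin); pose mu := law P.
have nu_le D : measurable D -> nu D <= mu D.
  move=> mD; change (P (W @^-1` D `&` E) <= P (W @^-1` D)).
  have mWD := measurableT_preimage mW mD.
  by rewrite le_measure ?inE//; exact: measurableI.
have numu : nu `<< mu.
  apply/null_content_dominatesP => D mD muD0; apply/eqP.
  by rewrite eq_le measure_ge0 andbT -muD0 nu_le.
pose f := Radon_Nikodym_SigmaFinite.f nu mu.
have intf : mu.-integrable setT f := Radon_Nikodym_SigmaFinite.f_integrable numu.
have fE := Radon_Nikodym_SigmaFinite.f_integral numu.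
have ffin := Radon_Nikodym_SigmaFinite.f_fin_num numu.
have f0 := Radon_Nikodym_SigmaFinite.f_ge0 numu.
have mf : measurable_fun setT f := measurable_int _ intf.
have f_le1 : mu [set w | 1 < f w] = 0.
  by apply: density_gt1_null => // D mD; rewrite -fE// nu_le.
(* [f] is at most 1 only almost everywhere: truncate it to get values in [0, 1]. *)
pose g := (fine \o f) \min (cst 1%R).
have mg : measurable_fun setT g.
  by apply: measurable_minr => //; exact: measurableT_comp mf.
have g01 w : (0 <= g w <= 1)%R by rewrite ge_min lexx orbT le_min ler01 fine_ge0.
have gf : ae_eq mu setT (EFin \o g) f.
  exists [set w | 1 < f w]; split => //.
    by rewrite -[X in measurable X]setTI; apply: measurable_lte.
  move=> w /= /not_implyP[_]; apply: contra_notP => /negP; rewrite -leNgt => fw1.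
  by rewrite /g/= min_l -?lee_fin ?fineK.
exists g; split=> //; split=> // D mD.
transitivity (\int[mu]_(w in D) (g w)%:E).
  rewrite ge0_integral_pushforward//; first exact/measurable_EFinP/measurable_funTS.
  by move=> w _; rewrite lee_fin; case/andP: (g01 w).
rewrite (ae_eq_integral _ _ mD _ _ (ae_eq_subset (subsetT D) gf)); last 2 first.
- exact/measurable_EFinP/measurable_funTS.
- exact: measurable_funTS.
by rewrite -fE// setIC.
Qed.

Lemma cond_prob_version_integralM (E : set Om) (g k : TW -> R) (D : set TW) :
  measurable E -> cond_prob_version P W E g -> measurable D ->
  measurable_fun setT k -> (forall w, (0 <= k w)%R) ->
  \int[P]_(om in W @^-1` D) (g (W om) * k (W om))%:E =
  \int[P]_(om in W @^-1` D `&` E) (k (W om))%:E.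
Proof.
move=> mE [mg [g01 gE]] mD mk k0.
have g0 w : (0 <= g w)%R by case/andP: (g01 w).
have law_g B : measurable B -> P (W @^-1` B `&` E) = \int[law P]_(w in B) (g w)%:E.
  move=> mB; rewrite ge0_integral_pushforward//; last by move=> w _; rewrite lee_fin.
    by rewrite gE// setIC.
  exact/measurable_EFinP/measurable_funTS.
rewrite (integral_law_density mW mE mg g0 law_g (phi := fun w => (k w)%:E) mD); last 2 first.
- exact/measurable_EFinP/measurable_funTS.
- by move=> w _; rewrite lee_fin.
rewrite ge0_integral_pushforward//.
- by apply: eq_integral => om _; rewrite /= mulrC EFinM.
- by apply: emeasurable_funM; exact/measurable_EFinP/measurable_funTS.
- by move=> w _; rewrite -EFinM lee_fin mulr_ge0.
Qed.

Lemma cond_indep_of_posterior dV dS (TV : measurableType dV) (TS : measurableType dS)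
    (V : Om -> TV) (S : Om -> TS) :
  measurable_fun setT V ->
  (forall B, measurable B -> exists h : TW -> R,
    [/\ measurable_fun setT h, forall w, (0 <= h w <= 1)%R &
        forall A D, measurable A -> measurable D ->
        \int[P]_(om in V @^-1` A `&` W @^-1` D) (h (W om))%:E =
        P (V @^-1` A `&` W @^-1` D `&` S @^-1` B)]) ->
  cond_indep P V S W.
Proof.
move=> mV hS A B mA mB.
have mVA := measurableT_preimage mV mA.
have [gA gAV] := cond_prob_version_exists mVA.
have [h [mh h01 hE]] := hS B mB.
have h0 w : (0 <= h w)%R by case/andP: (h01 w).
exists gA, h, (gA \* h)%R; split => //.
- split=> //; split=> // D mD.
  by have := hE setT D measurableT mD; rewrite preimage_setT setTI setIC.
- have [mgA [gA01 _]] := gAV; split; first exact: measurable_funM.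
  split=> [w|D mD].
    have /andP[? ?] := gA01 w; have /andP[? ?] := h01 w.
    by rewrite mulr_ge0//= mulr_ile1.
  by rewrite (cond_prob_version_integralM mVA gAV)// setIC hE// setIAC.
- exact: aeW.
Qed.

End conditional_probability.

Section split_bool.
Local Open Scope ereal_scope.
Context d (T : measurableType d) (R : realType) (mu : {measure set T -> \bar R}).
Variables (Z : T -> bool) (G : set T).
Hypotheses (mZ : measurable_fun setT Z) (mG : measurable G).

Let mGZ b : measurable (G `&` Z @^-1` [set b]).
Proof. exact/measurableI/measurableT_preimage. Qed.

Let setI_split_bool :
  G = (G `&` Z @^-1` [set true]) `|` (G `&` Z @^-1` [set false]).
Proof.
rewrite -setIUr (_ : _ `|` _ = setT) ?setIT//.
by apply/seteqP; split=> t //= _; case: (Z t); [left|right].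
Qed.

Let disj_split_bool :
  [disjoint G `&` Z @^-1` [set true] & G `&` Z @^-1` [set false]].
Proof. by apply/disj_setPS => t [[_ /= ->]] []. Qed.

Lemma measure_split_bool :
  mu G = mu (G `&` Z @^-1` [set true]) + mu (G `&` Z @^-1` [set false]).
Proof. by rewrite {1}setI_split_bool measureU//; exact/disj_set2P. Qed.

Lemma ge0_integral_split_bool (f : T -> \bar R) :
  measurable_fun G f -> (forall t, G t -> 0 <= f t) ->
  \int[mu]_(t in G) f t = \int[mu]_(t in G `&` Z @^-1` [set true]) f t +
                         \int[mu]_(t in G `&` Z @^-1` [set false]) f t.
Proof.
by move=> mf f0; rewrite {1}setI_split_bool ge0_integral_setU// -?setI_split_bool.
Qed.

End split_bool.

Lemma measurable_mulmx_tuple (R : realType) (m n : nat) (M : 'M[R]_(m, n)) :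
  measurable_fun setT (fun x : n.-tuple R => coltup (M *m tcol x)).
Proof.
apply/measurable_fun_tnthP => i.
rewrite (_ : _ \o _ = fun x => \sum_(j < n) M i j * tnth x j); last first.
  by apply/funext => x; rewrite /= tnth_mktuple !mxE; apply: eq_bigr => j _; rewrite mxE.
by apply: measurable_sum => j; apply: measurable_funM => //; exact: measurable_tnth.
Qed.

Definition bool_index (b : bool) : 'I_2 := if b then ord_max else ord0.

Lemma tr_row_mx_mul_bool (R : pzRingType) (n : nat) (b : bool -> 'cV[R]_n) (v : 'cV[R]_n) y :
  ((row_mx (b false) (b true))^T *m v) (bool_index y) 0 = ((b y)^T *m v) 0 0.
Proof.
rewrite tr_row_mx mul_col_mx; case: y => /=.
  by rewrite (_ : ord_max = rshift 1 ord0) ?col_mxEd//; exact: val_inj.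
by rewrite (_ : ord0 = lshift 1 (ord0 : 'I_1)) ?col_mxEu//; exact: val_inj.
Qed.

Section exponential_tilt.
Variables (R : realType) (d : nat) (lam : {measure set (d.-tuple R) -> \bar R}).
Variables (dO : measure_display) (Om : measurableType dO) (P : probability Om R).
Variables (X : Om -> d.-tuple R) (Y Rr : Om -> bool).
Hypotheses (mX : measurable_fun setT X) (mY : measurable_fun setT Y).
Hypothesis mR : measurable_fun setT Rr.

Local Notation Yset y := (Y @^-1` [set y]).
Local Notation Rset r := (Rr @^-1` [set r]).

Hypothesis hpos : forall y r, (0 < P (Yset y `&` Rset r))%E.
Variable p : bool -> bool -> d.-tuple R -> R.
Hypotheses (mp : forall y r, measurable_fun setT (p y r)) (ppos : forall y r x, 0 < p y r x).
Hypothesis hdens : forall y r A, measurable A ->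
  P (X @^-1` A `&` (Yset y `&` Rset r)) =
  (P (Yset y `&` Rset r) * \int[lam]_(x in A) (p y r x)%:E)%E.
Variables (alpha : bool -> R) (beta : bool -> 'cV[R]_d).
Hypothesis htilt : forall x y,
  p y false x * condP P (Yset y) (Rset false) =
  expR (alpha y + ((beta y)^T *m tcol x) 0 0) * p y true x * condP P (Yset y) (Rset true).

Definition proj_beta (x : d.-tuple R) : 2.-tuple R :=
  coltup ((row_mx (beta false) (beta true))^T *m tcol x).
Definition YU (om : Om) : bool * 2.-tuple R := (Y om, proj_beta (X om)).

Let mYR y r : measurable (Yset y `&` Rset r).
Proof. by apply: measurableI; apply: measurableT_preimage. Qed.

Lemma measurable_YU : measurable_fun setT YU.
Proof. exact/measurable_fun_pair/(measurableT_comp (measurable_mulmx_tuple _)). Qed.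

Definition pYR y r : R := fine (P (Yset y `&` Rset r)).
Definition pR r : R := fine (P (Rset r)).
Definition odds_R : R := pR false / pR true.

Lemma pYRE y r : P (Yset y `&` Rset r) = (pYR y r)%:E.
Proof. by rewrite fineK// fin_num_measure. Qed.

Lemma pYR_gt0 y r : 0 < pYR y r.
Proof. by rewrite -lte_fin -pYRE. Qed.

Lemma pR_gt0 r : 0 < pR r.
Proof.
have mRr : measurable (Rset r) by apply: measurableT_preimage.
rewrite /pR fine_gt0// (lt_le_trans (hpos true r)) ?le_measure ?inE//=.
by rewrite (le_lt_trans (probability_le1 _ mRr)) ?ltry.
Qed.

Lemma odds_R_gt0 : 0 < odds_R.
Proof. by rewrite divr_gt0// pR_gt0. Qed.

(* P(R = 1 | Y = y, X = x) at w = (y, B^T x), by Bayes' rule and the tilt identity *)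
Definition posterior1 (w : bool * 2.-tuple R) : R :=
  (1 + expR (alpha w.1 + tnth w.2 (bool_index w.1)) * odds_R)^-1.
Definition posterior (r : bool) (w : bool * 2.-tuple R) : R :=
  if r then posterior1 w else 1 - posterior1 w.

Lemma posterior01 r w : 0 <= posterior r w <= 1.
Proof.
have : 0 < expR (alpha w.1 + tnth w.2 (bool_index w.1)) * odds_R.
  by rewrite mulr_gt0 ?expR_gt0 ?odds_R_gt0.
rewrite /posterior /posterior1; set s := (_ * _) => s0.
have : 0 < (1 + s)^-1 < 1 by rewrite invr_gt0 invf_lt1; lra.
by case: r; lra.
Qed.

Lemma measurable_posterior r : measurable_fun setT (posterior r).
Proof.
have mlogistic y : measurable_fun setT (fun t => (1 + expR (alpha y + t) * odds_R)^-1).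
  apply: nonincreasing_measurable => // s t st.
  have pos u : 0 < 1 + expR (alpha y + u) * odds_R.
    by rewrite addr_gt0// mulr_gt0 ?expR_gt0 ?odds_R_gt0.
  by rewrite lef_pV2 ?posrE ?pos// lerD2l ler_pM2r ?odds_R_gt0// ler_expR lerD2l.
have mposterior1 : measurable_fun setT posterior1.
  rewrite (_ : posterior1 = fun w => if w.1
      then (1 + expR (alpha true + tnth w.2 (bool_index true)) * odds_R)^-1
      else (1 + expR (alpha false + tnth w.2 (bool_index false)) * odds_R)^-1).
    by apply: measurable_fun_ifT => //; apply: measurableT_comp (mlogistic _) _;
      exact: measurableT_comp (measurable_tnth _) measurable_snd.
  by apply/funext => -[[]].
by case: r => //; exact: measurable_funB.
Qed.

Lemma posterior_tilt r y x :
  posterior r (y, proj_beta x) * (pYR y false * p y false x + pYR y true * p y true x) =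
  pYR y r * p y r x.
Proof.
have eE : tnth (proj_beta x) (bool_index y) = ((beta y)^T *m tcol x) 0 0.
  by rewrite tnth_mktuple tr_row_mx_mul_bool.
set e := expR (alpha y + tnth (proj_beta x) (bool_index y)).
have pR0 r' : pR r' != 0 by rewrite gt_eqF// pR_gt0.
have tilt : pYR y false * p y false x = e * odds_R * (pYR y true * p y true x).
  have := htilt x y; rewrite /condP -/(pYR y false) -/(pYR y true) -/(pR false) -/(pR true).
  rewrite -eE -/e => h.
  rewrite (_ : pYR y false * _ = p y false x * (pYR y false / pR false) * pR false).
    by rewrite h /odds_R; field.
  by field.
have s1 : 1 + e * odds_R != 0.
  by rewrite gt_eqF// addr_gt0// mulr_gt0 ?expR_gt0 ?odds_R_gt0.
by case: r; rewrite /posterior /posterior1 /= -/e tilt; field.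
Qed.

Lemma cell_density y r B : measurable B ->
  P (X @^-1` B `&` (Yset y `&` Rset r)) = (\int[lam]_(x in B) (pYR y r * p y r x)%:E)%E.
Proof.
move=> mB; rewrite hdens// pYRE.
under [RHS]eq_integral do rewrite EFinM.
rewrite ge0_integralZl ?lee_fin ?ltW ?pYR_gt0//.
- exact/measurable_EFinP/measurable_funTS.
- by move=> x _; rewrite lee_fin ltW.
Qed.

Lemma integral_posterior_Yset r y A : measurable A ->
  (\int[P]_(om in X @^-1` A `&` Yset y) (posterior r (y, proj_beta (X om)))%:E)%E =
  P (X @^-1` A `&` (Yset y `&` Rset r)).
Proof.
move=> mA; pose phi x := (posterior r (y, proj_beta x))%:E.
have mphi : measurable_fun setT phi.
  apply/measurable_EFinP/(measurableT_comp (measurable_posterior r)).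
  exact: measurable_fun_pair (measurable_mulmx_tuple _).
have phi0 x : A x -> (0 <= phi x)%E.
  by move=> _; rewrite lee_fin; case/andP: (posterior01 r (y, proj_beta x)).
have mq r' : measurable_fun setT (fun x => pYR y r' * p y r' x).
  exact: measurable_funM.
have q0 r' x : 0 <= pYR y r' * p y r' x by rewrite mulr_ge0 ?ltW ?pYR_gt0.
have cell r' := integral_law_density mX (mYR y r') (mq r') (q0 r') (cell_density y r')
  (phi := phi) mA (measurable_funTS mphi) phi0.
have mG : measurable (X @^-1` A `&` Yset y).
  by apply: measurableI; apply: measurableT_preimage.
rewrite (ge0_integral_split_bool P mR mG); last 2 first.
- exact/measurable_funTS/(measurableT_comp mphi mX).
- by move=> om [? _]; exact: phi0.
have mpq r' : measurable_fun A (fun x => phi x * (pYR y r' * p y r' x)%:E)%E.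
  apply: emeasurable_funM; first exact: measurable_funTS mphi.
  exact/measurable_EFinP/measurable_funTS.
have pq0 r' x : A x -> (0 <= phi x * (pYR y r' * p y r' x)%:E)%E.
  by move=> Ax; rewrite mule_ge0 ?phi0 ?lee_fin.
rewrite -!setIA !cell -ge0_integralD//; try solve [exact: pq0|exact: mpq].
rewrite cell_density//; apply: eq_integral => x _.
by rewrite -!EFinM -EFinD -mulrDr addrC posterior_tilt.
Qed.

Lemma integral_posterior r A D : measurable A -> measurable D ->
  (\int[P]_(om in X @^-1` A `&` YU @^-1` D) (posterior r (YU om))%:E)%E =
  P (X @^-1` A `&` YU @^-1` D `&` Rset r).
Proof.
move=> mA mD; set G := X @^-1` A `&` YU @^-1` D.
have mG : measurable G.
  by apply: measurableI; apply: measurableT_preimage => //; exact: measurable_YU.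
pose A_ y := A `&` (fun x => (y, proj_beta x)) @^-1` D.
have mA_ y : measurable (A_ y).
  apply/measurableI/measurableT_preimage => //.
  exact: measurable_fun_pair (measurable_mulmx_tuple _).
have GY y : G `&` Yset y = X @^-1` A_ y `&` Yset y.
  apply/seteqP; split=> om /=; first by move=> [[Aom]]; rewrite /YU => + <-.
  by move=> [[Aom Dom] Yy]; split=> //; split=> //=; rewrite /YU Yy.
have integral_GY y : (\int[P]_(om in G `&` Yset y) (posterior r (YU om))%:E)%E =
    P (G `&` Rset r `&` Yset y).
  rewrite GY setIAC GY -setIA -integral_posterior_Yset//.
  by apply: eq_integral => om /[!inE] -[_ /= Yy]; rewrite /YU Yy.
have mGR : measurable (G `&` Rset r) by apply: measurableI => //; exact: measurableT_preimage.
rewrite (ge0_integral_split_bool P mY mG) ?(measure_split_bool P mY mGR) ?integral_GY//.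
- apply/measurable_funTS/measurable_EFinP.
  exact: measurableT_comp (measurable_posterior r) measurable_YU.
- by move=> om _; rewrite lee_fin; case/andP: (posterior01 r (YU om)).
Qed.

Definition posterior_in (B : set bool) (w : bool * 2.-tuple R) : R :=
  (if `[< B true >] then posterior true w else 0) +
  (if `[< B false >] then posterior false w else 0).

Lemma posterior_in01 B w : 0 <= posterior_in B w <= 1.
Proof.
have := posterior01 true w; have := posterior01 false w.
by rewrite /posterior_in /posterior; case: asboolP => _; case: asboolP => _; lra.
Qed.

Lemma measurable_posterior_in B : measurable_fun setT (posterior_in B).
Proof.
by apply: measurable_funD; case: asboolP => _ //; exact: measurable_posterior.
Qed.

Lemma integral_posterior_in B A D : measurable A -> measurable D ->
  (\int[P]_(om in X @^-1` A `&` YU @^-1` D) (posterior_in B (YU om))%:E)%E =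
  P (X @^-1` A `&` YU @^-1` D `&` Rr @^-1` B).
Proof.
move=> mA mD; set G := X @^-1` A `&` YU @^-1` D.
have mG : measurable G.
  by apply: measurableI; apply: measurableT_preimage => //; exact: measurable_YU.
have mGB : measurable (G `&` Rr @^-1` B).
  by apply: measurableI => //; exact: measurableT_preimage.
pose part r om := (if `[< B r >] then posterior r (YU om) else 0)%:E.
have integral_part r : (\int[P]_(om in G) part r om)%E = P (G `&` Rr @^-1` B `&` Rset r).
  rewrite -setIA /part; case: asboolP => Br.
    rewrite integral_posterior// (_ : Rr @^-1` B `&` Rset r = Rset r)//.
    by apply/seteqP; split=> om /=; [case|move=> Rom; rewrite Rom].
  rewrite integral0_eq// (_ : Rr @^-1` B `&` Rset r = set0) ?setI0 ?measure0//.
  by apply/seteqP; split=> om //= -[+ Rom]; rewrite Rom.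
have mpart r : measurable_fun G (part r).
  apply/measurable_EFinP/measurable_funTS; case: asboolP => _ //.
  exact: measurableT_comp (measurable_posterior r) measurable_YU.
have part0 r om : G om -> (0 <= part r om)%E.
  by move=> _; rewrite lee_fin; case: asboolP => _ //; case/andP: (posterior01 r (YU om)).
under eq_integral do rewrite EFinD.
rewrite ge0_integralD//; try solve [exact: part0|exact: mpart].
by rewrite (measure_split_bool P mR mGB); congr (_ + _); exact: integral_part.
Qed.

Lemma cond_indep_tilt dT (TT : measurableType dT) (F : d.-tuple R -> TT) :
  measurable_fun setT F -> cond_indep P (F \o X) Rr YU.
Proof.
move=> mF; have mFX : measurable_fun setT (F \o X) by exact: measurableT_comp.
refine (cond_indep_of_posterior measurable_YU mFX _) => B mB.
exists (posterior_in B); split; [exact: measurable_posterior_in|exact: posterior_in01|].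
move=> A D mA mD.
exact: integral_posterior_in (measurableT_preimage mF mA) mD.
Qed.

End exponential_tilt.

Theorem lemma6 (R : realType) (d : nat)
  (lam : {measure set (d.-tuple R) -> \bar R})
  (hlam : is_lebesgue_measure_Rd lam)
  (dO : measure_display) (Om : measurableType dO) (P : probability Om R)
  (X : Om -> d.-tuple R) (Y Rr : Om -> bool)
  (mX : measurable_fun setT X) (mY : measurable_fun setT Y)
  (mR : measurable_fun setT Rr)
  (hpos : forall y r, (0 < P (Y @^-1` [set y] `&` Rr @^-1` [set r]))%E)
  (p : bool -> bool -> d.-tuple R -> R)
  (mp : forall y r, measurable_fun setT (p y r))
  (ppos : forall y r x, 0 < p y r x)
  (hdens : forall y r (A : set (d.-tuple R)), measurable A ->
     P (X @^-1` A `&` (Y @^-1` [set y] `&` Rr @^-1` [set r])) =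
     (P (Y @^-1` [set y] `&` Rr @^-1` [set r]) * \int[lam]_(x in A) (p y r x)%:E)%E)
  (alpha : bool -> R) (beta : bool -> 'cV[R]_d)
  (htilt : forall x y,
     p y false x * condP P (Y @^-1` [set y]) (Rr @^-1` [set false]) =
     expR (alpha y + ((beta y)^T *m tcol x) 0 0) *
       p y true x * condP P (Y @^-1` [set y]) (Rr @^-1` [set true]))
  (PB : 'M[R]_d)
  (hPB : is_orth_proj_colspace PB (row_mx (beta false) (beta true))) :
  let B := row_mx (beta false) (beta true) in
  let U := fun om => coltup (B^T *m tcol (X om)) in
  let V := fun om => coltup ((1%:M - PB) *m tcol (X om)) in
  cond_indep P V Rr (fun om => (Y om, U om)) /\
  cond_indep P X Rr (fun om => (Y om, U om)).
Proof.
move=> B U V; split.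
- exact: (cond_indep_tilt mX mY mR hpos mp ppos hdens htilt
    (measurable_mulmx_tuple (1%:M - PB))).
- exact: (cond_indep_tilt mX mY mR hpos mp ppos hdens htilt (@measurable_id _ _ setT)).
Qed.
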